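(* Let $G$ be a torsion-free virtually nilpotent group and let $N \unlhd G$ be a maximal normal finite index nilpotent subgroup. Then every finite conjugacy class of $G$ is contained in $\mathcal{Z}(N)$. Consequently the FC-centre of $G$ equals $\mathcal{Z}(N)$.
   Context: The FC-centre of $G$ is the set of elements of $G$ whose conjugacy class in $G$ is finite. $\mathcal{Z}(N)$ denotes the centre of $N$. *)

From Stdlib Require Import List.

Record group := Group {
  carrier :> Type;
  gmul : carrier -> carrier -> carrier;
  ginv : carrier -> carrier;
  gone : carrier;
  gmulA : forall x y z, gmul x (gmul y z) = gmul (gmul x y) z;
  gmul1 : forall x, gmul gone x = x;
  gmulV : forall x, gmul (ginv x) x = gone
}.

Arguments gmul {g} _ _.
Arguments ginv {g} _.
Arguments gone {g}.

Section Defs.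
Variable G : group.

Definition subset (A B : G -> Prop) : Prop := forall x, A x -> B x.

Definition is_subgroup (H : G -> Prop) : Prop :=
  H gone /\ (forall x y, H x -> H y -> H (gmul x y)) /\ (forall x, H x -> H (ginv x)).

Definition conj (x g : G) : G := gmul (ginv g) (gmul x g).

Definition is_normal (H : G -> Prop) : Prop :=
  is_subgroup H /\ forall x g, H x -> H (conj x g).

(* H has finite index: finitely many left cosets g_i H cover G *)
Definition finite_index (H : G -> Prop) : Prop :=
  exists l : list G, forall g, exists t, In t l /\ H (gmul (ginv t) g).

Definition comm (x y : G) : G := gmul (ginv x) (gmul (ginv y) (gmul x y)).

Definition gen (S : G -> Prop) : G -> Prop :=
  fun x => forall K, is_subgroup K -> subset S K -> K x.

Fixpoint lcs (N : G -> Prop) (i : nat) : G -> Prop :=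
  match i with
  | O => N
  | S j => gen (fun z => exists x y, lcs N j x /\ N y /\ z = comm x y)
  end.

Definition nilpotent (N : G -> Prop) : Prop :=
  is_subgroup N /\ exists c, forall x, lcs N c x -> x = gone.

Fixpoint gpow (x : G) (n : nat) : G :=
  match n with O => gone | S m => gmul x (gpow x m) end.

Definition torsion_free : Prop :=
  forall (x : G) (n : nat), gpow x (S n) = gone -> x = gone.

Definition virtually_nilpotent : Prop :=
  exists H, nilpotent H /\ finite_index H.

Definition nfn (N : G -> Prop) : Prop :=
  is_normal N /\ finite_index N /\ nilpotent N.

Definition maximal_nfn (N : G -> Prop) : Prop :=
  nfn N /\ forall M, nfn M -> subset N M -> subset M N.

Definition finite_class (x : G) : Prop :=
  exists l : list G, forall g, In (conj x g) l.

Definition FC_centre : G -> Prop := finite_class.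

Definition centre (N : G -> Prop) : G -> Prop :=
  fun x => N x /\ forall y, N y -> gmul x y = gmul y x.

End Defs.

(* If x has finitely many conjugates and y lies in N, two of the conjugates
   x^(y^i) coincide, so x commutes with a power y^n; then y^x and y have the
   same n-th power, and since roots are unique in a torsion-free nilpotent
   group, x centralises N.  The centraliser C of N is abelian: Z(N) = C ∩ N is
   central of finite index in C, and the transfer C -> Z(N) kills commutators
   while raising elements of Z(N) to the power [C : Z(N)], so commutators are
   torsion.  Hence N C is again a normal nilpotent subgroup of finite index, and
   maximality of N gives C ⊆ N, so x ∈ Z(N).  Conversely an element of
   C_G(N) has at most [G : N] conjugates. *)

From Stdlib Require Import Arith List Lia Classical ClassicalEpsilon Permutation FinFun.

Section Group.
Variable G : group.
Local Notation "x * y" := (@gmul G x y).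
Local Notation "x ^-1" := (@ginv G x) (at level 3, left associativity, format "x ^-1").
Local Notation "x ^+ n" := (gpow G x n) (at level 29, left associativity).

Lemma mulgAr (x y z : G) : (x * y) * z = x * (y * z).
Proof. symmetry; apply gmulA. Qed.

Lemma mulKg (x y : G) : x^-1 * (x * y) = y.
Proof. rewrite gmulA, gmulV; apply gmul1. Qed.

Lemma mulgV (x : G) : x * x^-1 = gone.
Proof.
  assert (idem : (x * x^-1) * (x * x^-1) = x * x^-1)
    by (rewrite mulgAr, mulKg; reflexivity).
  rewrite <- (mulKg (x * x^-1) (x * x^-1)) at 1.
  rewrite idem; apply gmulV.
Qed.

Lemma mulg1 (x : G) : x * gone = x.
Proof. rewrite <- (gmulV G x), gmulA, mulgV; apply gmul1. Qed.

Lemma mulKVg (x y : G) : x * (x^-1 * y) = y.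
Proof. rewrite gmulA, mulgV; apply gmul1. Qed.

Lemma invg_unique (x y : G) : x * y = gone -> x^-1 = y.
Proof. intros E. rewrite <- (mulKg x y), E; symmetry; apply mulg1. Qed.

Lemma invgK (x : G) : (x^-1)^-1 = x.
Proof. apply invg_unique, gmulV. Qed.

Lemma invgM (x y : G) : (x * y)^-1 = y^-1 * x^-1.
Proof. apply invg_unique. rewrite mulgAr, mulKVg; apply mulgV. Qed.

Lemma invg1 : (@gone G)^-1 = gone.
Proof. apply invg_unique, gmul1. Qed.

Hint Rewrite mulgAr gmul1 mulg1 gmulV mulgV mulKg mulKVg invgK invgM invg1 : group_simpl.
Ltac group_simpl := unfold conj, comm; autorewrite with group_simpl.

Lemma commute_invl (a b : G) : a * b = b * a -> a^-1 * b = b * a^-1.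
Proof.
  intros ab. transitivity (a^-1 * (b * a) * a^-1); [now group_simpl|].
  rewrite <- ab; now group_simpl.
Qed.

Lemma gpowD (x : G) m n : x ^+ (m + n) = x ^+ m * x ^+ n.
Proof.
  induction m as [|m IHm]; cbn [gpow Nat.add]; [now group_simpl|].
  rewrite IHm; now group_simpl.
Qed.

Lemma commute_gpow (a b : G) n : a * b = b * a -> a ^+ n * b = b * a ^+ n.
Proof.
  intros ab; induction n as [|n IHn]; cbn [gpow]; [now group_simpl|].
  rewrite mulgAr, IHn, gmulA, ab, mulgAr; reflexivity.
Qed.

Lemma gpowMn (a b : G) n : a * b = b * a -> (a * b) ^+ n = a ^+ n * b ^+ n.
Proof.
  intros ab; induction n as [|n IHn]; cbn [gpow]; [now group_simpl|].
  rewrite IHn, !mulgAr; f_equal.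
  rewrite !gmulA; f_equal. symmetry; apply commute_gpow, ab.
Qed.

Lemma gpowVn (b : G) n : b^-1 ^+ n = (b ^+ n)^-1.
Proof.
  induction n as [|n IHn]; cbn [gpow]; [now group_simpl|].
  rewrite IHn, <- invgM, commute_gpow; reflexivity.
Qed.

Lemma gpow1n n : gone ^+ n = gone.
Proof. induction n as [|n IHn]; cbn [gpow]; [|rewrite IHn]; now group_simpl. Qed.

Lemma conj_gpow (x g : G) n : conj G x g ^+ n = conj G (x ^+ n) g.
Proof. induction n as [|n IHn]; cbn [gpow]; [|rewrite IHn]; now group_simpl. Qed.

Lemma commute_gpow_inj (a b : G) k : torsion_free G ->
  a * b = b * a -> a ^+ S k = b ^+ S k -> a = b.
Proof.
  intros TF ab Eab.
  assert (quot1 : (a * b^-1) ^+ S k = gone).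
  { rewrite gpowMn, gpowVn, <- Eab by (symmetry; apply commute_invl; auto).
    apply mulgV. }
  apply TF in quot1.
  transitivity (a * b^-1 * b); [now group_simpl|].
  rewrite quot1; apply gmul1.
Qed.

Lemma conjMg (x y g : G) : conj G (x * y) g = conj G x g * conj G y g.
Proof. now group_simpl. Qed.

Lemma conjVg (x g : G) : conj G (x^-1) g = (conj G x g)^-1.
Proof. now group_simpl. Qed.

Lemma conj1g (g : G) : conj G gone g = gone.
Proof. now group_simpl. Qed.

Lemma conjRg (x y g : G) : conj G (comm G x y) g = comm G (conj G x g) (conj G y g).
Proof. now group_simpl. Qed.

Lemma conjgM (x p q : G) : conj G x (p * q) = conj G (conj G x p) q.
Proof. now group_simpl. Qed.

Lemma conjgKV (x g : G) : conj G (conj G x g^-1) g = x.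
Proof. now group_simpl. Qed.

Lemma conjg_inj (x y g : G) : conj G x g = conj G y g -> x = y.
Proof.
  intros E. transitivity (g * (conj G x g * g^-1)); [now group_simpl|].
  rewrite E; now group_simpl.
Qed.

Lemma commg1 (u : G) : comm G u gone = gone.
Proof. now group_simpl. Qed.

Lemma commgg (u : G) : comm G u u = gone.
Proof. now group_simpl. Qed.

Lemma commg_sym (u v : G) : comm G v u = (comm G u v)^-1.
Proof. now group_simpl. Qed.

Lemma commgMr (u v w : G) : comm G u (v * w) = comm G u w * conj G (comm G u v) w.
Proof. now group_simpl. Qed.

Lemma commgVr (u v : G) : comm G u v^-1 = (conj G (comm G u v) v^-1)^-1.
Proof. now group_simpl. Qed.

Lemma commg_conj (a b : G) : comm G a (conj G a b) = (comm G (comm G a b) a)^-1.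
Proof. now group_simpl. Qed.

Lemma commg_eq1 (u v : G) : comm G u v = gone <-> u * v = v * u.
Proof.
  split; intros E.
  - transitivity (v * u * comm G u v); [now group_simpl|].
    rewrite E; apply mulg1.
  - unfold comm; rewrite E; now group_simpl.
Qed.

Lemma commgMr_commute (u v c : G) :
  c * (v^-1 * (u * v)) = v^-1 * (u * v) * c -> comm G u (v * c) = comm G u v.
Proof.
  intros E. transitivity (u^-1 * (c^-1 * (v^-1 * (u * v) * c))); [now group_simpl|].
  rewrite <- E; now group_simpl.
Qed.

(** * Subgroups and the lower central series *)

Lemma group1 (H : G -> Prop) : is_subgroup G H -> H gone.
Proof. intros [h _]; exact h. Qed.

Lemma groupM (H : G -> Prop) x y : is_subgroup G H -> H x -> H y -> H (x * y).
Proof. intros (_ & h & _); auto. Qed.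

Lemma groupV (H : G -> Prop) x : is_subgroup G H -> H x -> H x^-1.
Proof. intros (_ & _ & h); auto. Qed.

Lemma groupJ (H : G -> Prop) x g : is_subgroup G H -> H x -> H g -> H (conj G x g).
Proof. intros HH Hx Hg. unfold conj. repeat first [apply groupM | apply groupV]; auto. Qed.

Lemma groupR (H : G -> Prop) x y : is_subgroup G H -> H x -> H y -> H (comm G x y).
Proof. intros HH Hx Hy. unfold comm. repeat first [apply groupM | apply groupV]; auto. Qed.

Lemma groupX (H : G -> Prop) x n : is_subgroup G H -> H x -> H (x ^+ n).
Proof. intros HH Hx; induction n; cbn [gpow]; [apply group1 | apply groupM]; auto. Qed.

Lemma subgroupI (A B : G -> Prop) :
  is_subgroup G A -> is_subgroup G B -> is_subgroup G (fun x => A x /\ B x).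
Proof.
  intros HA HB. split; [|split].
  - split; apply group1; auto.
  - intros x y [] []; split; apply groupM; auto.
  - intros x []; split; apply groupV; auto.
Qed.

Lemma subset_gen (S : G -> Prop) : subset G S (gen G S).
Proof. intros x Sx K _ SK. apply SK, Sx. Qed.

Lemma gen_subgroup (S : G -> Prop) : is_subgroup G (gen G S).
Proof.
  split; [|split].
  - intros K HK _. apply group1, HK.
  - intros x y Hx Hy K HK SK. apply groupM; [exact HK | apply Hx | apply Hy]; auto.
  - intros x Hx K HK SK. apply groupV; [exact HK | apply Hx]; auto.
Qed.

Lemma gen_min (S K : G -> Prop) : is_subgroup G K -> subset G S K -> subset G (gen G S) K.
Proof. intros HK SK x Hx; apply Hx; auto. Qed.

Lemma lcs_subgroup (H : G -> Prop) j : is_subgroup G H -> is_subgroup G (lcs G H j).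
Proof. destruct j; [auto | intros; apply gen_subgroup]. Qed.

Lemma lcs_sub (H : G -> Prop) j : is_subgroup G H -> subset G (lcs G H j) H.
Proof.
  intros HH; induction j; intros x Hx; [exact Hx|].
  apply (Hx H HH). intros z (a & b & Ha & Hb & ->). apply groupR; auto.
Qed.

Lemma mem_lcs_commg (H : G -> Prop) j x y :
  lcs G H j x -> H y -> lcs G H (S j) (comm G x y).
Proof. intros Hx Hy. apply subset_gen. exists x, y; auto. Qed.

Lemma lcs_conj (H : G -> Prop) j x h :
  is_subgroup G H -> lcs G H j x -> H h -> lcs G H j (conj G x h).
Proof.
  intros HH; revert x; induction j as [|j IHj]; intros x Hx Hh; [apply groupJ; auto|].
  apply (Hx (fun z => lcs G H (S j) (conj G z h))).
  - pose proof (lcs_subgroup H (S j) HH).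
    split; [|split].
    + rewrite conj1g. apply group1; auto.
    + intros a b Ha Hb. rewrite conjMg. apply groupM; auto.
    + intros a Ha. rewrite conjVg. apply groupV; auto.
  - intros z (a & b & Ha & Hb & ->). rewrite conjRg.
    apply mem_lcs_commg; auto. apply groupJ; auto.
Qed.

Lemma lcs_trivial_S (H : G -> Prop) j :
  (forall x, lcs G H j x -> x = gone) -> forall x, lcs G H (S j) x -> x = gone.
Proof.
  intros Htriv x Hx. apply (Hx (fun z => z = gone)).
  - split; [reflexivity | split].
    + intros a b -> ->. apply gmul1.
    + intros a ->. apply invg1.
  - intros z (a & b & Ha & Hb & ->). rewrite (Htriv a Ha). now group_simpl.
Qed.

Lemma lcs_shift (H K : G -> Prop) k :
  is_subgroup G H -> subset G K H ->
  (forall u v, K u -> K v -> lcs G H (S k) (comm G u v)) ->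
  forall j x, lcs G K (S j) x -> lcs G H (S (k + j)) x.
Proof.
  intros HH KH HK; induction j as [|j IHj]; intros x Hx.
  - rewrite Nat.add_0_r. apply (Hx (lcs G H (S k))); [apply lcs_subgroup; auto|].
    intros z (u & v & Ku & Kv & ->); auto.
  - rewrite Nat.add_succ_r. apply (Hx (lcs G H (S (S (k + j))))); [apply lcs_subgroup; auto|].
    intros z (u & v & Ku & Kv & ->). apply mem_lcs_commg; auto.
Qed.

Lemma commg_mem_subgroup (H D : G -> Prop) u :
  is_subgroup G H -> is_subgroup G D -> (forall d h, D d -> H h -> D (conj G d h)) ->
  is_subgroup G (fun v => H v /\ D (comm G u v)).
Proof.
  intros HH HD HDn. split; [|split].
  - split; [apply group1; auto | rewrite commg1; apply group1; auto].
  - intros v w [Hv Dv] [Hw Dw]. split; [apply groupM; auto|].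
    rewrite commgMr. apply groupM; auto.
  - intros v [Hv Dv]. split; [apply groupV; auto|].
    rewrite commgVr. apply groupV, HDn; auto. apply groupV; auto.
Qed.

Lemma commg_gen_mem (H D S : G -> Prop) :
  is_subgroup G H -> is_subgroup G D -> (forall d h, D d -> H h -> D (conj G d h)) ->
  subset G S H -> (forall u v, S u -> S v -> D (comm G u v)) ->
  forall u v, gen G S u -> gen G S v -> D (comm G u v).
Proof.
  intros HH HD HDn SH SD u v Su Sv.
  assert (DS : forall s, S s -> D (comm G s v)).
  { intros s Ss. apply (gen_min S (fun w => H w /\ D (comm G s w))); auto.
    - apply commg_mem_subgroup; auto.
    - intros w Sw; auto. }
  rewrite <- invgK, <- commg_sym. apply groupV; auto.
  apply (gen_min S (fun w => H w /\ D (comm G v w))); auto.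
  - apply commg_mem_subgroup; auto.
  - intros s Ss. split; auto. rewrite commg_sym. apply groupV; auto.
Qed.

(** * Unique roots in torsion-free nilpotent groups *)

Lemma gen_conjg_commg_lcs (H : G -> Prop) a b : is_subgroup G H -> H a -> H b ->
  forall u v, gen G (fun z => z = a \/ z = conj G a b) u ->
  gen G (fun z => z = a \/ z = conj G a b) v -> lcs G H 2 (comm G u v).
Proof.
  intros HH Ha Hb. pose proof (lcs_subgroup H 2 HH) as H2.
  apply commg_gen_mem with H; auto.
  - intros; apply lcs_conj; auto.
  - intros z [-> | ->]; auto. apply groupJ; auto.
  - assert (Haa' : lcs G H 2 (comm G a (conj G a b))).
    { rewrite commg_conj. apply groupV, mem_lcs_commg, Ha; auto.
      apply mem_lcs_commg; auto. }
    intros u v [-> | ->] [-> | ->]; rewrite ?commgg; try (apply group1; auto); auto.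
    rewrite commg_sym. apply groupV; auto.
Qed.

(* [(a^b)^n = a^n], and [<a, a^b>] has smaller class than [H] because its
   commutators lie in [lcs H 2]; so induction gives [a^b = a]. *)
Lemma nilpotent_class_gpow_inj c : torsion_free G -> forall H, is_subgroup G H ->
  (forall x, lcs G H (S c) x -> x = gone) ->
  forall a b k, H a -> H b -> a ^+ S k = b ^+ S k -> a = b.
Proof.
  intros TF; induction c as [|c IHc]; intros H HH Htriv a b k Ha Hb Eab.
  - apply (commute_gpow_inj a b k TF); auto.
    apply commg_eq1, Htriv, mem_lcs_commg; auto.
  - set (a' := conj G a b).
    assert (Ea' : a ^+ S k = a' ^+ S k).
    { unfold a'. rewrite conj_gpow, Eab. unfold conj.
      rewrite commute_gpow, mulKg by reflexivity. reflexivity. }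
    set (K := gen G (fun z => z = a \/ z = a')).
    assert (KH : subset G K H).
    { apply gen_min; auto. intros z [-> | ->]; auto. apply groupJ; auto. }
    assert (a_eq : a = a').
    { apply (IHc K (gen_subgroup _)) with k; auto; try (apply subset_gen; auto).
      intros x Hx. apply Htriv, (lcs_shift H K 1); auto.
      apply gen_conjg_commg_lcs; auto. }
    apply (commute_gpow_inj a b k TF); auto.
    rewrite a_eq at 2. unfold a', conj. rewrite mulKVg. reflexivity.
Qed.

Lemma nilpotent_gpow_inj (H : G -> Prop) a b k : torsion_free G -> nilpotent G H ->
  H a -> H b -> a ^+ S k = b ^+ S k -> a = b.
Proof.
  intros TF [HH [c Hc]].
  apply (nilpotent_class_gpow_inj c TF H HH), lcs_trivial_S, Hc.
Qed.

(** * Transfer into a central subgroup of finite index *)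

Lemma pigeonhole {A : Type} (f : nat -> A) (l : list A) :
  (forall i, In (f i) l) -> exists i d, f i = f (S d + i).
Proof.
  intros Hf. apply NNPP; intro Hn.
  assert (f_inj : Injective f).
  { intros i j E. destruct (Nat.lt_trichotomy i j) as [h | [h | h]]; auto; exfalso; apply Hn.
    - exists i, (j - S i). replace (S (j - S i) + i) with j by lia. exact E.
    - exists j, (i - S j). replace (S (i - S j) + j) with i by lia. symmetry; exact E. }
  assert (uniq : NoDup (map f (seq 0 (S (length l))))).
  { apply Injective_map_NoDup; [exact f_inj | apply seq_NoDup]. }
  assert (sub : incl (map f (seq 0 (S (length l)))) l).
  { intros y Hy. apply in_map_iff in Hy. destruct Hy as (i & <- & _). apply Hf. }
  pose proof (NoDup_incl_length uniq sub) as Hlen.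
  rewrite length_map, length_seq in Hlen. lia.
Qed.

Definition prod (l : list G) : G := fold_right (fun a b => a * b) gone l.

Lemma prod_const (z : G) (l : list G) : prod (map (fun _ => z) l) = z ^+ length l.
Proof. induction l; simpl; congruence. Qed.

Section AbelianProduct.
Variable Z : G -> Prop.
Hypothesis HZ : is_subgroup G Z.
Hypothesis Zabelian : forall x y, Z x -> Z y -> x * y = y * x.

Lemma prod_mem (l : list G) : (forall x, In x l -> Z x) -> Z (prod l).
Proof.
  induction l; simpl; intros Hl; [apply group1 | apply groupM]; auto.
Qed.

Lemma prod_perm (l1 l2 : list G) :
  Permutation l1 l2 -> (forall x, In x l1 -> Z x) -> prod l1 = prod l2.
Proof.
  induction 1 as [|x l l' _ IH|x y l|l l' l'' P1 IH1 _ IH2]; intros Hl; simpl.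
  - reflexivity.
  - f_equal; apply IH; intros; apply Hl; right; auto.
  - rewrite !gmulA, (Zabelian y x); auto; apply Hl; simpl; auto.
  - rewrite IH1, IH2; auto. intros z Hz. apply Hl, (Permutation_in z (Permutation_sym P1) Hz).
Qed.

Lemma prod_map_mul {A : Type} (f g : A -> G) (l : list A) :
  (forall a, In a l -> Z (f a) /\ Z (g a)) ->
  prod (map (fun a => f a * g a) l) = prod (map f l) * prod (map g l).
Proof.
  induction l as [|a l IH]; simpl; intros Hl; [now group_simpl|].
  rewrite IH by auto. rewrite !mulgAr. f_equal. rewrite !gmulA. f_equal.
  apply Zabelian; [apply Hl; auto|]. apply prod_mem.
  intros x Hx. apply in_map_iff in Hx. destruct Hx as (b & <- & Hb). apply Hl; auto.
Qed.

End AbelianProduct.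

Record left_transversal (C Z : G -> Prop) (T : list G) : Prop := {
  transversal_uniq : NoDup T;
  transversal_sub : forall t, In t T -> C t;
  transversal_coset_uniq : forall t t', In t T -> In t' T -> Z (t^-1 * t') -> t = t';
  transversal_cover : forall c, C c -> exists t, In t T /\ Z (t^-1 * c) }.

Lemma exists_transversal_in_cosets (C N : G -> Prop) (l : list G) :
  is_subgroup G C -> is_subgroup G N ->
  exists T, left_transversal (fun c => C c /\ exists s, In s l /\ N (s^-1 * c))
                             (fun x => N x /\ C x) T.
Proof.
  intros HC HN. pose proof (subgroupI N C HN HC) as HZ.
  induction l as [|s l IH].
  { exists nil. constructor.
    - constructor.
    - intros t [].
    - intros t t' [].
    - intros c [_ (s & [] & _)]. }
  destruct IH as [T [Tuniq Tsub Tcoset Tcover]].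
  set (covered c := exists t, In t T /\ N (t^-1 * c) /\ C (t^-1 * c)).
  destruct (classic (exists c0, C c0 /\ N (s^-1 * c0) /\ ~ covered c0))
    as [(c0 & Cc0 & Nc0 & new) | old].
  - exists (c0 :: T). constructor.
    + constructor; auto. intros Hin; apply new. exists c0.
      rewrite gmulV. split; auto. split; apply group1; auto.
    + intros t [<- | Ht]; [split; eauto using in_eq|].
      destruct (Tsub t Ht) as [Ct (s' & Hs' & Ns')]. split; eauto using in_cons.
    + intros t t' [<- | Ht] [<- | Ht'] Ztt'; auto; exfalso; apply new.
      * exists t'. split; auto.
        replace (t'^-1 * c0) with ((c0^-1 * t')^-1) by now group_simpl.
        destruct Ztt'; split; apply groupV; auto.
      * exists t; auto.
    + intros c [Cc (s' & [<- | Hs'] & Ns'c)].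
      * exists c0. split; [apply in_eq|].
        split; [|apply groupM; auto; apply groupV; auto].
        replace (c0^-1 * c) with ((s^-1 * c0)^-1 * (s^-1 * c)) by now group_simpl.
        apply groupM; auto; apply groupV; auto.
      * destruct (Tcover c) as (t & Ht & Zt); [eauto|].
        exists t; split; [apply in_cons|]; auto.
  - exists T. constructor; auto.
    + intros t Ht. destruct (Tsub t Ht) as [Ct (s' & Hs' & Ns')]. split; eauto using in_cons.
    + intros c [Cc (s' & [<- | Hs'] & Ns'c)].
      * apply NNPP; intros Hc. apply old. exists c; auto.
      * apply Tcover; eauto.
Qed.

Lemma exists_transversal (C N : G -> Prop) (l : list G) :
  is_subgroup G C -> is_subgroup G N ->
  (forall c, C c -> exists s, In s l /\ N (s^-1 * c)) ->
  exists T, left_transversal C (fun x => N x /\ C x) T.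
Proof.
  intros HC HN Hl.
  destruct (exists_transversal_in_cosets C N l HC HN) as [T [Tuniq Tsub Tcoset Tcover]].
  exists T. constructor; auto.
  intros t Ht. apply (proj1 (Tsub t Ht)).
Qed.

Section Transfer.
Variables (C Z : G -> Prop) (T : list G).
Hypotheses (HC : is_subgroup G C) (HZ : is_subgroup G Z) (ZC : subset G Z C)
  (Zcentral : forall z c, Z z -> C c -> z * c = c * z) (HT : left_transversal C Z T).

Let Zabelian x y : Z x -> Z y -> x * y = y * x.
Proof. auto. Qed.

Definition coset_rep (c : G) : G :=
  epsilon (inhabits gone) (fun t => In t T /\ Z (t^-1 * c)).

Lemma coset_rep_spec c : C c -> In (coset_rep c) T /\ Z ((coset_rep c)^-1 * c).
Proof. intros Cc. unfold coset_rep. apply epsilon_spec, (transversal_cover _ _ _ HT), Cc. Qed.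

Lemma coset_rep_eq c t : C c -> In t T -> Z (t^-1 * c) -> coset_rep c = t.
Proof.
  intros Cc Ht Zt. destruct (coset_rep_spec c Cc) as [Hr Zr].
  apply (transversal_coset_uniq _ _ _ HT); auto.
  replace ((coset_rep c)^-1 * t) with ((coset_rep c)^-1 * c * (t^-1 * c)^-1)
    by now group_simpl.
  apply groupM, groupV; auto.
Qed.

Lemma coset_rep_mem t g : In t T -> C g -> In (coset_rep (t * g)) T.
Proof.
  intros Ht Cg. apply coset_rep_spec, groupM; auto. apply (transversal_sub _ _ _ HT), Ht.
Qed.

Definition transfer_factor (t g : G) : G := (coset_rep (t * g))^-1 * (t * g).

Lemma transfer_factor_mem t g : In t T -> C g -> Z (transfer_factor t g).
Proof.
  intros Ht Cg. apply coset_rep_spec, groupM; auto. apply (transversal_sub _ _ _ HT), Ht.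
Qed.

Lemma transfer_factorM t g h : In t T -> C g -> C h ->
  transfer_factor t (g * h) = transfer_factor t g * transfer_factor (coset_rep (t * g)) h.
Proof.
  intros Ht Cg Ch. pose proof (transversal_sub _ _ _ HT) as TC.
  pose proof (coset_rep_mem t g Ht Cg) as Hs.
  pose proof (coset_rep_mem _ h Hs Ch) as Hr.
  pose proof (transfer_factor_mem t g Ht Cg) as Z1.
  pose proof (transfer_factor_mem _ h Hs Ch) as Z2.
  unfold transfer_factor in *.
  set (s := coset_rep (t * g)) in *. set (r := coset_rep (s * h)) in *.
  set (z1 := s^-1 * (t * g)) in *. set (z2 := r^-1 * (s * h)) in *.
  (* [t g h = s z1 h = z1 s h] because [z1] is central *)
  assert (E : r^-1 * (t * (g * h)) = z1 * z2).
  { transitivity (r^-1 * (s * z1 * h)); [unfold z1; now group_simpl|].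
    rewrite <- (Zcentral z1 s), mulgAr, gmulA, <- (Zcentral z1 r^-1) by (auto; apply groupV; auto).
    apply mulgAr. }
  rewrite (coset_rep_eq (t * (g * h)) r); auto.
  - repeat apply groupM; auto.
  - rewrite E. apply groupM; auto.
Qed.

Definition transfer (g : G) : G := prod (map (fun t => transfer_factor t g) T).

Lemma transfer_mem g : C g -> Z (transfer g).
Proof.
  intros Cg. unfold transfer. apply prod_mem; auto. intros x Hx. apply in_map_iff in Hx.
  destruct Hx as (t & <- & Ht). apply transfer_factor_mem; auto.
Qed.

Lemma coset_rep_perm g : C g -> Permutation (map (fun t => coset_rep (t * g)) T) T.
Proof.
  intros Cg. pose proof (transversal_sub _ _ _ HT) as TC.
  apply Permutation_map_same_l; [|intros x Hx; apply in_map_iff in Hx;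
                                   destruct Hx as (t & <- & Ht); apply coset_rep_mem; auto].
  apply Injective_map_NoDup_in; [|apply (transversal_uniq _ _ _ HT)].
  intros t t' Ht Ht' E. symmetry. apply (transversal_coset_uniq _ _ _ HT); auto.
  destruct (coset_rep_spec (t * g)) as [_ Zt]; [apply groupM; auto|].
  destruct (coset_rep_spec (t' * g)) as [_ Zt']; [apply groupM; auto|].
  rewrite E in Zt.
  assert (Zconj : Z (conj G (t'^-1 * t) g)).
  { replace (conj G (t'^-1 * t) g)
      with (((coset_rep (t' * g))^-1 * (t' * g))^-1 * ((coset_rep (t' * g))^-1 * (t * g)))
      by now group_simpl.
    apply groupM, Zt; auto. apply groupV; auto. }
  replace (t'^-1 * t) with (g * (conj G (t'^-1 * t) g * g^-1)) by now group_simpl.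
  rewrite (Zcentral _ g^-1), mulKVg by (auto; apply groupV; auto). exact Zconj.
Qed.

Lemma transferM g h : C g -> C h -> transfer (g * h) = transfer g * transfer h.
Proof.
  intros Cg Ch. unfold transfer.
  rewrite (map_ext_in _ (fun t => transfer_factor t g * transfer_factor (coset_rep (t * g)) h))
    by (intros; apply transfer_factorM; auto).
  rewrite prod_map_mul with (Z := Z); auto.
  2:{ intros t Ht. split; apply transfer_factor_mem; auto. apply coset_rep_mem; auto. }
  f_equal.
  rewrite <- (map_map (fun t => coset_rep (t * g)) (fun s => transfer_factor s h)).
  apply prod_perm with (Z := Z); auto.
  - apply Permutation_map, coset_rep_perm, Cg.
  - intros x Hx. rewrite map_map in Hx. apply in_map_iff in Hx.
    destruct Hx as (t & <- & Ht). apply transfer_factor_mem; auto. apply coset_rep_mem; auto.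
Qed.

Lemma transfer_central z : Z z -> transfer z = z ^+ length T.
Proof.
  intros Zz. unfold transfer. rewrite <- prod_const.
  f_equal. apply map_ext_in. intros t Ht. unfold transfer_factor.
  pose proof (transversal_sub _ _ _ HT t Ht).
  rewrite (coset_rep_eq (t * z) t); auto.
  - apply mulKg.
  - apply groupM; auto.
  - rewrite mulKg; auto.
Qed.

Lemma transfer1 : transfer gone = gone.
Proof. rewrite transfer_central; [apply gpow1n | apply group1; auto]. Qed.

Lemma transferV g : C g -> transfer g^-1 = (transfer g)^-1.
Proof.
  intros Cg. symmetry. apply invg_unique.
  rewrite <- transferM, mulgV; [apply transfer1 | auto | apply groupV; auto].
Qed.

Lemma transferX g n : C g -> transfer (g ^+ n) = transfer g ^+ n.
Proof.
  intros Cg. induction n as [|n IHn]; cbn [gpow]; [apply transfer1|].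
  rewrite transferM, IHn; auto. apply groupX; auto.
Qed.

Lemma transferR a b : C a -> C b -> transfer (comm G a b) = gone.
Proof.
  intros Ca Cb. assert (C a^-1) by (apply groupV; auto). assert (C b^-1) by (apply groupV; auto).
  unfold comm. rewrite !transferM, !transferV by (repeat apply groupM; auto).
  rewrite (Zabelian (transfer a) (transfer b)) by (apply transfer_mem; auto).
  now group_simpl.
Qed.

Lemma transversal_gpow_mem w : C w -> exists d, Z (w ^+ S d).
Proof.
  intros Cw.
  destruct (pigeonhole (fun i => coset_rep (w ^+ i)) T) as (i & d & E).
  { intros i. apply coset_rep_spec, groupX; auto. }
  exists d. cbv beta in E. rewrite Nat.add_comm, gpowD in E.
  destruct (coset_rep_spec (w ^+ i)) as [_ Zi]; [apply groupX; auto|].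
  destruct (coset_rep_spec (w ^+ i * w ^+ S d)) as [_ Zid];
    [apply groupM; try apply groupX; auto|].
  rewrite <- E in Zid.
  replace (w ^+ S d)
    with (((coset_rep (w ^+ i))^-1 * w ^+ i)^-1 * ((coset_rep (w ^+ i))^-1 * (w ^+ i * w ^+ S d)))
    by now group_simpl.
  apply groupM, Zid; auto. apply groupV; auto.
Qed.

Theorem transversal_central_abelian a b : torsion_free G -> C a -> C b -> a * b = b * a.
Proof.
  intros TF Ca Cb. apply commg_eq1.
  assert (Cw : C (comm G a b)) by (apply groupR; auto).
  destruct (transversal_gpow_mem _ Cw) as [d Zd].
  assert (E : transfer (comm G a b ^+ S d) = gone)
    by (rewrite transferX, transferR, gpow1n; auto).
  rewrite transfer_central in E by exact Zd.
  destruct (transversal_cover _ _ _ HT gone) as (t & Ht & _); [apply group1; auto|].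
  destruct T as [|t1 T']; [destruct Ht|].
  apply TF in E. apply TF in E. exact E.
Qed.

End Transfer.

(** * The centraliser of N *)

Definition centralizer (N : G -> Prop) (g : G) : Prop := forall y, N y -> g * y = y * g.

Lemma finite_class_centralizes (N : G -> Prop) x : torsion_free G ->
  is_normal G N -> nilpotent G N -> finite_class G x -> centralizer N x.
Proof.
  intros TF [HN Nconj] Nnil [l Hl] y Ny.
  destruct (pigeonhole (fun i => conj G x (y ^+ i)) l (fun i => Hl _)) as (i & d & E).
  cbv beta in E. rewrite gpowD, conjgM in E. apply conjg_inj in E.
  assert (x_yd : x * y ^+ S d = y ^+ S d * x).
  { rewrite E at 2. unfold conj. rewrite mulKVg. reflexivity. }
  assert (Eyx : conj G y x ^+ S d = y ^+ S d).
  { rewrite conj_gpow. unfold conj. rewrite <- x_yd, mulKg. reflexivity. }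
  apply (nilpotent_gpow_inj N _ _ d TF Nnil (Nconj y x Ny) Ny) in Eyx.
  transitivity (x * conj G y x); [rewrite Eyx; reflexivity | apply mulKVg].
Qed.

Lemma centralizer_subgroup (N : G -> Prop) : is_subgroup G (centralizer N).
Proof.
  split; [|split].
  - intros y _. now group_simpl.
  - intros a b Ca Cb y Ny. rewrite mulgAr, Cb, gmulA, Ca, mulgAr by exact Ny. reflexivity.
  - intros a Ca y Ny. apply commute_invl, Ca, Ny.
Qed.

Lemma centralizer_conj (N : G -> Prop) c g :
  is_normal G N -> centralizer N c -> centralizer N (conj G c g).
Proof.
  intros [_ Nconj] Cc m Nm.
  rewrite <- (conjgKV m g), <- !conjMg. f_equal. apply Cc, Nconj, Nm.
Qed.

Lemma centralizer_abelian (N : G -> Prop) a b : torsion_free G ->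
  is_subgroup G N -> finite_index G N -> centralizer N a -> centralizer N b -> a * b = b * a.
Proof.
  intros TF HN [l Hl] Ca Cb. pose proof (centralizer_subgroup N) as HC.
  destruct (exists_transversal (centralizer N) N l HC HN) as [T HT]; [intros c _; apply Hl|].
  apply (transversal_central_abelian (centralizer N) (fun x => N x /\ centralizer N x) T HC
           (subgroupI _ _ HN HC)); auto.
  - intros z [_ Cz]; exact Cz.
  - intros z c [Nz _] Cc. symmetry; apply Cc, Nz.
Qed.

Definition mulset (A B : G -> Prop) (g : G) : Prop := exists a b, A a /\ B b /\ g = a * b.

Lemma mulset_centralizer_subgroup (N : G -> Prop) :
  is_subgroup G N -> is_subgroup G (mulset N (centralizer N)).
Proof.
  intros HN. pose proof (centralizer_subgroup N) as HC. split; [|split].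
  - exists gone, gone. split; [|split]; [apply group1; auto.. | now group_simpl].
  - intros x y (n & c & Nn & Cc & ->) (n' & c' & Nn' & Cc' & ->).
    exists (n * n'), (c * c'). split; [|split]; [apply groupM; auto.. |].
    rewrite !mulgAr. f_equal. rewrite !gmulA. f_equal. apply Cc, Nn'.
  - intros x (n & c & Nn & Cc & ->). exists n^-1, c^-1.
    split; [|split]; [apply groupV; auto.. |].
    rewrite invgM. symmetry. apply commute_invl. symmetry. apply (groupV _ _ HC Cc), Nn.
Qed.

Lemma subset_mulset_centralizer (N : G -> Prop) : subset G N (mulset N (centralizer N)).
Proof.
  intros n Nn. exists n, gone.
  split; [|split]; [exact Nn | apply group1, centralizer_subgroup | now group_simpl].
Qed.

Lemma lcs_central_product (H K : G -> Prop) :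
  is_subgroup G H -> is_subgroup G K -> subset G H K ->
  (forall k, K k -> exists h c, H h /\ centralizer K c /\ k = h * c) ->
  forall j x, lcs G K (S j) x -> lcs G H (S j) x.
Proof.
  intros HH HK HKsub Kdec.
  assert (drop_central : forall u v, K u -> K v -> exists h, H h /\ comm G u v = comm G u h).
  { intros u v Ku Kv. destruct (Kdec v Kv) as (h & c & Hh & Cc & ->).
    exists h. split; auto. apply commgMr_commute, Cc.
    apply groupM, groupM; auto. apply groupV; auto. }
  induction j as [|j IHj]; intros x Hx.
  - apply (Hx (lcs G H 1)); [apply lcs_subgroup; auto|].
    intros z (u & v & Ku & Kv & ->).
    destruct (drop_central u v Ku Kv) as (h' & Hh' & ->).
    rewrite (commg_sym h' u).
    destruct (drop_central h' u (HKsub _ Hh') Ku) as (h & Hh & ->).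
    apply groupV, mem_lcs_commg; auto. apply lcs_subgroup; auto.
  - apply (Hx (lcs G H (S (S j)))); [apply lcs_subgroup; auto|].
    intros z (u & v & Ku & Kv & ->).
    destruct (drop_central u v (lcs_sub K (S j) HK u Ku) Kv) as (h & Hh & ->).
    apply mem_lcs_commg; auto.
Qed.

(* [C_G(N)] is abelian, hence central in [N C_G(N)], which therefore has the same
   lower central series as [N] from the first term on. *)
Lemma mulset_centralizer_nfn (N : G -> Prop) :
  torsion_free G -> nfn G N -> nfn G (mulset N (centralizer N)).
Proof.
  intros TF [Nnormal [[l Hl] [HN [c Hc]]]].
  pose proof (mulset_centralizer_subgroup N HN) as HM.
  pose proof (subset_mulset_centralizer N) as NM.
  split; [split|split].
  - exact HM.
  - intros x g (n & c' & Nn & Cc' & ->). exists (conj G n g), (conj G c' g).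
    split; [apply Nnormal; auto | split; [apply centralizer_conj; auto | apply conjMg]].
  - exists l. intros g. destruct (Hl g) as (t & Ht & Nt). exists t; auto.
  - split; [exact HM|]. exists (S c).
    intros x Hx. apply (lcs_trivial_S N c Hc).
    apply (lcs_central_product N (mulset N (centralizer N))); auto.
    intros k (n & c' & Nn & Cc' & ->). exists n, c'. split; [|split]; auto.
    intros y (n'' & c'' & Nn'' & Cc'' & ->).
    rewrite gmulA, (Cc' n'' Nn''), !mulgAr. f_equal.
    apply (centralizer_abelian N); auto. exists l; exact Hl.
Qed.

Lemma centralizer_sub_maximal (N : G -> Prop) :
  torsion_free G -> maximal_nfn G N -> subset G (centralizer N) N.
Proof.
  intros TF [Nnfn Nmax] x Cx.
  apply (Nmax _ (mulset_centralizer_nfn N TF Nnfn)).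
  - apply subset_mulset_centralizer.
  - exists gone, x. destruct Nnfn as [[HN _] _].
    split; [|split]; [apply group1; auto | exact Cx | now group_simpl].
Qed.

(* If [g = t n] with [n \in N], then [x^g = (x^t)^n = x^t]. *)
Lemma centralizer_finite_class (N : G -> Prop) x :
  is_normal G N -> finite_index G N -> centralizer N x -> finite_class G x.
Proof.
  intros Nnormal [l Hl] Cx. exists (map (conj G x) l). intros g.
  destruct (Hl g) as (t & Ht & Nn). apply in_map_iff. exists t. split; auto.
  rewrite <- (mulKVg t g), conjgM.
  pose proof (centralizer_conj N x t Nnormal Cx) as Cxt.
  symmetry. unfold conj at 1. rewrite (Cxt _ Nn), mulKg. reflexivity.
Qed.

End Group.

Theorem lemma3p2 (G : group) (N : G -> Prop) :
  torsion_free G -> virtually_nilpotent G -> maximal_nfn G N ->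
  (forall x : G, finite_class G x -> centre G N x) /\
  (forall x : G, FC_centre G x <-> centre G N x).
Proof.
  (* [virtually_nilpotent G] is implied by [maximal_nfn G N]. *)
  intros TF _ Nmax.
  pose proof Nmax as [[Nnormal [Nfi Nnil]] _].
  assert (fc_centre : forall x, finite_class G x -> centre G N x).
  { intros x Hx. pose proof (finite_class_centralizes G N x TF Nnormal Nnil Hx) as Cx.
    split; [apply (centralizer_sub_maximal G N TF Nmax), Cx | exact Cx]. }
  split; [exact fc_centre|].
  intros x. split; [apply fc_centre|].
  intros [_ Cx]. apply (centralizer_finite_class G N x Nnormal Nfi Cx).
Qed.
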